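(* Let $f_j,g_i:\mathbb{R}^n\to\mathbb{R}$ ($j=1,\dots,m$, $i=1,\dots,p$) be continuously differentiable, let $x\in\mathbb{R}^n$, and let $(t,d)$ be the solution of $QP(x)$. Then: (I) $t\le \Phi(x)-\frac12 d^Td$. (II) If $d=0$ and MFCQ holds at $x$, then $x$ is a strongly critical point of the MOP. (III) If $d\neq 0$, then there is $\bar\sigma>0$ such that for every $\sigma\ge\bar\sigma$ and every $j\in\{1,\dots,m\}$ one has $\theta_{j,\sigma}(x;d)<0$, and $d$ is a descent direction of $\Psi_{j,\sigma}$ at $x$ (i.e. there is $\bar\alpha>0$ with $\Psi_{j,\sigma}(x+\alpha d)<\Psi_{j,\sigma}(x)$ for all $\alpha\in(0,\bar\alpha]$).
   Context: The MOP is: minimize $(f_1(x),\dots,f_m(x))$ subject to $g_i(x)\le 0$, $i=1,\dots,p$, with feasible set $X=\{x: g_i(x)\le 0\ \forall i\}$. $\Phi(x)=\max\{0,g_1(x),\dots,g_p(x)\}$; $I(x)=\{i\in\{1,\dots,p\}: g_i(x)=\Phi(x)\}$. $\Phi^*(x;d)=\max\{\max_{i\in I(x)}(g_i(x)+\nabla g_i(x)^Td),\,0\}-\Phi(x)$ (the inner max over an empty set is omitted). For $\sigma>0$: $\Psi_{j,\sigma}(x)=f_j(x)+\sigma\Phi(x)$ and $\theta_{j,\sigma}(x;d)=\nabla f_j(x)^Td+\sigma\Phi^*(x;d)$. $QP(x)$: minimize over $(t,d)\in\mathbb{R}\times\mathbb{R}^n$ the quantity $t+\frac12 d^Td$ subject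 to $\nabla f_j(x)^Td\le t$ ($j=1,\dots,m$) and $g_i(x)+\nabla g_i(x)^Td\le t$ ($i=1,\dots,p$); it has a unique solution. MFCQ holds at $x$ if there is $z\in\mathbb{R}^n$ with $\nabla g_i(x)^Tz<0$ for all $i\in I(x)$. A point $x\in X$ is a strongly critical point of the MOP if there exist $\lambda\in\mathbb{R}^m_+\setminus\{0\}$ and $\mu\in\mathbb{R}^p_+$ with $\sum_j\lambda_j\nabla f_j(x)+\sum_i\mu_i\nabla g_i(x)=0$ and $\mu_ig_i(x)=0$ for all $i$. *)

From Stdlib Require Import Reals Lra Lia.
From Stdlib Require Vectors.Fin.
Open Scope R_scope.

Definition vec (n : nat) : Type := Fin.t n -> R.

Fixpoint vsum (n : nat) : (Fin.t n -> R) -> R :=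
  match n return (Fin.t n -> R) -> R with
  | O => fun _ => 0
  | S k => fun v => v Fin.F1 + vsum k (fun i => v (Fin.FS i))
  end.

Fixpoint vmax0 (n : nat) : (Fin.t n -> R) -> R :=
  match n return (Fin.t n -> R) -> R with
  | O => fun _ => 0
  | S k => fun v => Rmax (v Fin.F1) (vmax0 k (fun i => v (Fin.FS i)))
  end.

Definition dot {n : nat} (u v : vec n) : R := vsum n (fun i => u i * v i).
Definition vadd {n : nat} (u v : vec n) : vec n := fun i => u i + v i.
Definition vsub {n : nat} (u v : vec n) : vec n := fun i => u i - v i.
Definition vscal {n : nat} (a : R) (u : vec n) : vec n := fun i => a * u i.
Definition vzero (n : nat) : vec n := fun _ => 0.
Definition vnorm {n : nat} (u : vec n) : R := sqrt (dot u u).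

Definition has_gradient {n : nat} (f : vec n -> R) (x gr : vec n) : Prop :=
  forall eps : R, 0 < eps -> exists delta : R, 0 < delta /\
    forall h : vec n, vnorm h < delta ->
      Rabs (f (vadd x h) - f x - dot gr h) <= eps * vnorm h.

Definition is_C1 {n : nat} (f : vec n -> R) (df : vec n -> vec n) : Prop :=
  (forall x, has_gradient f x (df x)) /\
  (forall x eps, 0 < eps -> exists delta, 0 < delta /\
     forall y, vnorm (vsub y x) < delta -> vnorm (vsub (df y) (df x)) < eps).

Definition Phi {n p : nat} (g : Fin.t p -> vec n -> R) (x : vec n) : R :=
  vmax0 p (fun i => g i x).

(* Phi*(x;d) = max{ max_{i in I(x)} (g_i(x) + grad g_i(x)^T d), 0 } - Phi(x),
   where I(x) = { i : g_i(x) = Phi(x) }.  Indices outside I(x) contribute 0,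
   which does not change the outer max with 0 (empty inner max omitted). *)
Definition PhiStar {n p : nat} (g : Fin.t p -> vec n -> R)
  (dg : Fin.t p -> vec n -> vec n) (x d : vec n) : R :=
  vmax0 p (fun i => if Req_EM_T (g i x) (Phi g x)
                    then g i x + dot (dg i x) d else 0) - Phi g x.

Definition Psi {n p : nat} (fj : vec n -> R) (g : Fin.t p -> vec n -> R)
  (sigma : R) (x : vec n) : R := fj x + sigma * Phi g x.

Definition theta {n p : nat} (dfj : vec n -> vec n) (g : Fin.t p -> vec n -> R)
  (dg : Fin.t p -> vec n -> vec n) (sigma : R) (x d : vec n) : R :=
  dot (dfj x) d + sigma * PhiStar g dg x d.

Definition QP_feasible {n m p : nat} (df : Fin.t m -> vec n -> vec n)
  (g : Fin.t p -> vec n -> R) (dg : Fin.t p -> vec n -> vec n)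
  (x : vec n) (t : R) (d : vec n) : Prop :=
  (forall j, dot (df j x) d <= t) /\
  (forall i, g i x + dot (dg i x) d <= t).

Definition QP_solution {n m p : nat} (df : Fin.t m -> vec n -> vec n)
  (g : Fin.t p -> vec n -> R) (dg : Fin.t p -> vec n -> vec n)
  (x : vec n) (t : R) (d : vec n) : Prop :=
  QP_feasible df g dg x t d /\
  forall t' d', QP_feasible df g dg x t' d' ->
    t + / 2 * dot d d <= t' + / 2 * dot d' d'.

Definition MFCQ {n p : nat} (g : Fin.t p -> vec n -> R)
  (dg : Fin.t p -> vec n -> vec n) (x : vec n) : Prop :=
  exists z : vec n, forall i, g i x = Phi g x -> dot (dg i x) z < 0.

Definition feasible {n p : nat} (g : Fin.t p -> vec n -> R) (x : vec n) : Prop :=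
  forall i, g i x <= 0.

Definition strongly_critical {n m p : nat} (df : Fin.t m -> vec n -> vec n)
  (g : Fin.t p -> vec n -> R) (dg : Fin.t p -> vec n -> vec n) (x : vec n) : Prop :=
  feasible g x /\
  exists (lam : Fin.t m -> R) (mu : Fin.t p -> R),
    (forall j, 0 <= lam j) /\ (exists j, lam j <> 0) /\
    (forall i, 0 <= mu i) /\
    (forall k : Fin.t n,
       vsum m (fun j => lam j * df j x k) + vsum p (fun i => mu i * dg i x k) = 0) /\
    (forall i, mu i * g i x = 0).

(* (I) holds because (Phi(x), 0) is feasible for QP(x).

   (II) If d = 0 then t = Phi(x), and no v can make every objective gradient and every
   active constraint gradient strictly negative on v: a small step along v would
   improve the value of QP(x).  Gordan's alternative, proved by Fourier-Motzkin
   elimination, turns this into Fritz-John multipliers; MFCQ then forces Phi(x) = 0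
   and a nonzero objective multiplier.

   (III) Every linearized term in theta and in the first-order expansion of Psi along d
   is bounded through the QP constraints by t and max(t,0), so both are controlled by
   the slope t + sigma (max(t,0) - Phi(x)), which (I) makes negative for large sigma. *)

From Stdlib Require Import Reals Lra Lia List Classical FunctionalExtensionality.
From Stdlib Require Vectors.Fin.
Import ListNotations.
Open Scope R_scope.

Lemma Fin_S_ind n (P : Fin.t (S n) -> Prop) :
  P Fin.F1 -> (forall i, P (Fin.FS i)) -> forall i, P i.
Proof. intros H1 H2 i. apply (Fin.caseS' i P); auto. Qed.

Lemma Fin_inhabited m : (1 <= m)%nat -> inhabited (Fin.t m).
Proof. destruct m; intro; [lia | exact (inhabits Fin.F1)]. Qed.

Ltac vext := apply functional_extensionality; intro.

Lemma vsum_ext n (f g : Fin.t n -> R) : (forall i, f i = g i) -> vsum n f = vsum n g.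
Proof.
  revert f g; induction n; intros f g H; cbn [vsum]; [reflexivity|].
  rewrite (H Fin.F1). f_equal. apply IHn. intro; apply H.
Qed.

Lemma vsum_add n (f g : Fin.t n -> R) : vsum n (fun i => f i + g i) = vsum n f + vsum n g.
Proof. revert f g; induction n; intros f g; cbn [vsum]; [ring|]. rewrite IHn; ring. Qed.

Lemma vsum_scal n a (f : Fin.t n -> R) : vsum n (fun i => a * f i) = a * vsum n f.
Proof. revert f; induction n; intros f; cbn [vsum]; [ring|]. rewrite IHn; ring. Qed.

Lemma vsum_zero n : vsum n (fun _ => 0) = 0.
Proof. induction n; cbn [vsum]; [ring|]. rewrite IHn; ring. Qed.

Lemma vsum_ext_zero n (f : Fin.t n -> R) : (forall i, f i = 0) -> vsum n f = 0.
Proof. intro H. rewrite (vsum_ext _ _ _ H). apply vsum_zero. Qed.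

Lemma vsum_le n (f g : Fin.t n -> R) : (forall i, f i <= g i) -> vsum n f <= vsum n g.
Proof.
  revert f g; induction n; intros f g H; cbn [vsum]; [lra|].
  specialize (IHn (fun i => f (Fin.FS i)) (fun i => g (Fin.FS i)) (fun i => H (Fin.FS i))).
  specialize (H Fin.F1). lra.
Qed.

Lemma vsum_swap n p (F : Fin.t p -> Fin.t n -> R) :
  vsum n (fun k => vsum p (fun i => F i k)) = vsum p (fun i => vsum n (fun k => F i k)).
Proof.
  revert F; induction n; intros F; cbn [vsum].
  - rewrite vsum_zero. reflexivity.
  - rewrite IHn, <- vsum_add. reflexivity.
Qed.

Lemma vsum_indicator n (F : Fin.t n -> R) k :
  vsum n (fun j => if Fin.eq_dec j k then F j else 0) = F k.
Proof.
  revert F k; induction n; intros F k; [inversion k|].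
  revert k; apply Fin_S_ind; cbn [vsum].
  - destruct (Fin.eq_dec Fin.F1 Fin.F1) as [_|C]; [|congruence].
    rewrite vsum_ext_zero; [ring|].
    intro i; destruct (Fin.eq_dec (Fin.FS i) Fin.F1) as [E|_]; [inversion E|reflexivity].
  - intro k. destruct (Fin.eq_dec Fin.F1 (Fin.FS k)) as [E|_]; [inversion E|].
    rewrite (vsum_ext _ _ (fun j => if Fin.eq_dec j k then F (Fin.FS j) else 0)).
    + rewrite IHn; ring.
    + intro i. destruct (Fin.eq_dec (Fin.FS i) (Fin.FS k)) as [E|E];
      destruct (Fin.eq_dec i k) as [E'|E']; subst; auto.
      * apply Fin.FS_inj in E; congruence.
      * congruence.
Qed.

Lemma vsum_neg n (f : Fin.t n -> R) i0 :
  (forall i, f i <= 0) -> f i0 < 0 -> vsum n f < 0.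
Proof.
  revert f i0; induction n; intros f i0 H H0; [inversion i0|].
  cbn [vsum]. revert H0; pattern i0; revert i0; apply Fin_S_ind; cbv beta.
  - intro. assert (vsum n (fun i => f (Fin.FS i)) <= vsum n (fun _ => 0))
      by (apply vsum_le; auto). rewrite vsum_zero in H1. lra.
  - intros i Hi. specialize (IHn (fun i => f (Fin.FS i)) i (fun j => H (Fin.FS j)) Hi).
    specialize (H Fin.F1). lra.
Qed.

Lemma dot_scal_l n a (u v : vec n) : dot (vscal a u) v = a * dot u v.
Proof. unfold dot, vscal. rewrite <- vsum_scal. apply vsum_ext; intro; ring. Qed.

Lemma dot_scal_r n a (u v : vec n) : dot u (vscal a v) = a * dot u v.
Proof. unfold dot, vscal. rewrite <- vsum_scal. apply vsum_ext; intro; ring. Qed.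

Lemma dot_zero_r n (u : vec n) : dot u (vzero n) = 0.
Proof. apply vsum_ext_zero. intro; unfold vzero; ring. Qed.

Lemma dot_vsum_l n p (mu : Fin.t p -> R) (u : Fin.t p -> vec n) (z : vec n) :
  dot (fun k => vsum p (fun i => mu i * u i k)) z = vsum p (fun i => mu i * dot (u i) z).
Proof.
  unfold dot.
  rewrite (vsum_ext _ _ (fun k => vsum p (fun i => z k * (mu i * u i k))))
    by (intro k; rewrite Rmult_comm, <- vsum_scal; apply vsum_ext; intro; ring).
  rewrite vsum_swap. apply vsum_ext. intro i.
  rewrite <- vsum_scal. apply vsum_ext; intro; ring.
Qed.

Lemma dot_self_nonneg n (u : vec n) : 0 <= dot u u.
Proof.
  rewrite <- (vsum_zero n). apply vsum_le. intro. apply Rle_0_sqr.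
Qed.

Definition vtail {n} (c : vec (S n)) : vec n := fun i => c (Fin.FS i).
Definition vcons {n} (a : R) (w : vec n) : vec (S n) :=
  fun i => Fin.caseS' i (fun _ => R) a w.

Lemma dot_S n (u v : vec (S n)) : dot u v = u Fin.F1 * v Fin.F1 + dot (vtail u) (vtail v).
Proof. reflexivity. Qed.

Lemma vcons_zero n : vcons 0 (vzero n) = vzero (S n).
Proof. vext. pattern x; revert x; apply Fin_S_ind; reflexivity. Qed.

Lemma dot_self_eq0 n (u : vec n) : dot u u = 0 -> u = vzero n.
Proof.
  revert u; induction n; intros u H; vext; [inversion x|].
  rewrite dot_S in H. pose proof (dot_self_nonneg _ (vtail u)).
  assert (u Fin.F1 * u Fin.F1 = 0) by nra.
  revert x; apply Fin_S_ind; unfold vzero.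
  - nra.
  - intro i. apply (f_equal (fun w => w i) (IHn (vtail u) ltac:(lra))).
Qed.

Lemma dot_self_pos n (u : vec n) : u <> vzero n -> 0 < dot u u.
Proof.
  intro H. destruct (dot_self_nonneg _ u) as [|E]; auto.
  exfalso; apply H, dot_self_eq0; auto.
Qed.

Lemma vnorm_scal n a (u : vec n) : 0 <= a -> vnorm (vscal a u) = a * vnorm u.
Proof.
  intro Ha. unfold vnorm. rewrite dot_scal_l, dot_scal_r, <- Rmult_assoc.
  rewrite sqrt_mult_alt by nra. rewrite sqrt_square; auto.
Qed.

Lemma vmax0_nonneg n (v : Fin.t n -> R) : 0 <= vmax0 n v.
Proof.
  revert v; induction n; intro v; cbn [vmax0]; [lra|].
  eapply Rle_trans; [apply (IHn (fun i => v (Fin.FS i)))|apply Rmax_r].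
Qed.

Lemma vmax0_ge n (v : Fin.t n -> R) i : v i <= vmax0 n v.
Proof.
  revert v i; induction n; intros v i; [inversion i|]. cbn [vmax0].
  revert i; apply Fin_S_ind.
  - apply Rmax_l.
  - intro i. eapply Rle_trans; [apply (IHn (fun j => v (Fin.FS j)))|apply Rmax_r].
Qed.

Lemma vmax0_lub n (v : Fin.t n -> R) U : (forall i, v i <= U) -> 0 <= U -> vmax0 n v <= U.
Proof.
  revert v; induction n; intros v H H0; cbn [vmax0]; [auto|].
  apply Rmax_lub; auto.
Qed.

Lemma Phi_nonneg n p (g : Fin.t p -> vec n -> R) x : 0 <= Phi g x.
Proof. apply vmax0_nonneg. Qed.

Lemma Phi_ge n p (g : Fin.t p -> vec n -> R) x i : g i x <= Phi g x.
Proof. apply (vmax0_ge p (fun i => g i x)). Qed.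

Inductive conic {n} (L : list (vec n)) : vec n -> R -> Prop :=
| conic_nil : conic L (vzero n) 0
| conic_cons : forall c a w s, In c L -> 0 <= a -> conic L w s ->
    conic L (vadd w (vscal a c)) (s + a).

Lemma conic_weight_nonneg n (L : list (vec n)) w s : conic L w s -> 0 <= s.
Proof. induction 1; lra. Qed.

Lemma conic_single n (L : list (vec n)) c : In c L -> conic L c 1.
Proof.
  intro Hc. pose proof (conic_cons L c 1 _ _ Hc ltac:(lra) (conic_nil L)) as H.
  replace (vadd (vzero n) (vscal 1 c)) with c in H by (vext; unfold vadd, vscal, vzero; ring).
  replace (0 + 1) with 1 in H by ring. exact H.
Qed.

Lemma conic_add n (L : list (vec n)) w1 s1 w2 s2 :
  conic L w1 s1 -> conic L w2 s2 -> conic L (vadd w1 w2) (s1 + s2).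
Proof.
  intros H1 H2. induction H2.
  - replace (vadd w1 (vzero n)) with w1 by (vext; unfold vadd, vzero; ring).
    replace (s1 + 0) with s1 by ring. exact H1.
  - replace (vadd w1 (vadd w (vscal a c))) with (vadd (vadd w1 w) (vscal a c))
      by (vext; unfold vadd; ring).
    replace (s1 + (s + a)) with ((s1 + s) + a) by ring.
    apply conic_cons; auto.
Qed.

Lemma conic_scal n (L : list (vec n)) b w s :
  0 <= b -> conic L w s -> conic L (vscal b w) (b * s).
Proof.
  intros Hb H. induction H.
  - replace (vscal b (vzero n)) with (vzero n) by (vext; unfold vscal, vzero; ring).
    replace (b * 0) with 0 by ring. constructor.
  - replace (vscal b (vadd w (vscal a c))) with (vadd (vscal b w) (vscal (b * a) c))
      by (vext; unfold vscal, vadd; ring).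
    replace (b * (s + a)) with (b * s + b * a) by ring.
    apply conic_cons; auto. apply Rmult_le_pos; auto.
Qed.

Lemma conic_lift n (L : list (vec (S n))) (L' : list (vec n)) :
  (forall c', In c' L' -> exists s', 0 < s' /\ conic L (vcons 0 c') s') ->
  forall w s, conic L' w s ->
  exists s2, 0 <= s2 /\ (0 < s -> 0 < s2) /\ conic L (vcons 0 w) s2.
Proof.
  intros HL w s H. induction H.
  - exists 0. rewrite vcons_zero. repeat split; try lra. constructor.
  - destruct IHconic as [s2 [Hs2 [Hs2' Hc]]].
    destruct (HL c H) as [s' [Hs' Hc']].
    exists (s2 + a * s'). pose proof (conic_weight_nonneg _ _ _ _ H1).
    split; [nra|split].
    + intro Hp. destruct (Rle_lt_or_eq_dec 0 s H2) as [Hlt|Heq].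
      * specialize (Hs2' Hlt). nra.
      * subst. assert (0 < a) by lra. nra.
    + replace (vcons 0 (vadd w (vscal a c))) with (vadd (vcons 0 w) (vscal a (vcons 0 c))).
      * apply conic_add; auto. apply conic_scal; auto.
      * vext. pattern x; revert x; apply Fin_S_ind; intros; unfold vadd, vscal, vcons; simpl; ring.
Qed.

Definition head_pos {n} (c : vec (S n)) : bool := if Rlt_dec 0 (c Fin.F1) then true else false.
Definition head_neg {n} (c : vec (S n)) : bool := if Rlt_dec (c Fin.F1) 0 then true else false.
Definition head_zero {n} (c : vec (S n)) : bool := if Req_EM_T (c Fin.F1) 0 then true else false.

(* [fm_pair p q] is the combination [p_1 q - q_1 p] with first coordinate [0] dropped. *)
Definition fm_pair {n} (p q : vec (S n)) : vec n :=
  fun i => p Fin.F1 * q (Fin.FS i) - q Fin.F1 * p (Fin.FS i).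

Definition fm_elim {n} (L : list (vec (S n))) : list (vec n) :=
  map vtail (filter head_zero L) ++
  flat_map (fun p => map (fm_pair p) (filter head_neg L)) (filter head_pos L).

Lemma head_pos_spec n (c : vec (S n)) : head_pos c = true <-> 0 < c Fin.F1.
Proof. unfold head_pos; destruct Rlt_dec; split; intro; auto; discriminate. Qed.
Lemma head_neg_spec n (c : vec (S n)) : head_neg c = true <-> c Fin.F1 < 0.
Proof. unfold head_neg; destruct Rlt_dec; split; intro; auto; discriminate. Qed.
Lemma head_zero_spec n (c : vec (S n)) : head_zero c = true <-> c Fin.F1 = 0.
Proof. unfold head_zero; destruct Req_EM_T; split; intro; auto; try discriminate; contradiction. Qed.

Lemma fm_elim_vtail n (L : list (vec (S n))) c :
  In c L -> c Fin.F1 = 0 -> In (vtail c) (fm_elim L).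
Proof.
  intros H H0. apply in_or_app. left. apply in_map.
  apply filter_In. split; auto. apply head_zero_spec; auto.
Qed.

Lemma fm_elim_pair n (L : list (vec (S n))) p q : In p L -> 0 < p Fin.F1 ->
  In q L -> q Fin.F1 < 0 -> In (fm_pair p q) (fm_elim L).
Proof.
  intros. apply in_or_app. right. apply in_flat_map.
  exists p. split.
  - apply filter_In; split; auto. apply head_pos_spec; auto.
  - apply in_map. apply filter_In; split; auto. apply head_neg_spec; auto.
Qed.

Lemma in_fm_elim n (L : list (vec (S n))) c' : In c' (fm_elim L) ->
  (exists c, In c L /\ c Fin.F1 = 0 /\ c' = vtail c) \/
  (exists p q, In p L /\ 0 < p Fin.F1 /\ In q L /\ q Fin.F1 < 0 /\ c' = fm_pair p q).
Proof.
  intro H. apply in_app_or in H as [H|H].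
  - left. apply in_map_iff in H as [c [E Hc]]. apply filter_In in Hc as [Hc Hz].
    apply head_zero_spec in Hz. eauto.
  - right. apply in_flat_map in H as [p [Hp Hq]]. apply in_map_iff in Hq as [q [E Hq]].
    apply filter_In in Hp as [Hp Hp']. apply filter_In in Hq as [Hq Hq'].
    apply head_pos_spec in Hp'. apply head_neg_spec in Hq'. exists p, q; auto 10.
Qed.

Lemma dot_fm_pair n (p q : vec (S n)) v :
  dot (fm_pair p q) v = p Fin.F1 * dot (vtail q) v - q Fin.F1 * dot (vtail p) v.
Proof.
  unfold dot, fm_pair, vtail.
  rewrite (vsum_ext _ _ (fun i => p Fin.F1 * (q (Fin.FS i) * v i)
                                   + (- q Fin.F1) * (p (Fin.FS i) * v i))) by (intro; ring).
  rewrite vsum_add, !vsum_scal. ring.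
Qed.

Lemma conic_fm_elim n (L : list (vec (S n))) c' :
  In c' (fm_elim L) -> exists s', 0 < s' /\ conic L (vcons 0 c') s'.
Proof.
  intro Hc'. apply in_fm_elim in Hc' as [[c [Hc [Hz E]]] | [p [q [Hp [Hp' [Hq [Hq' E]]]]]]];
    subst c'.
  - exists 1. split; [lra|].
    replace (vcons 0 (vtail c)) with c by
      (vext; pattern x; revert x; apply Fin_S_ind; intros; unfold vcons, vtail; simpl; auto).
    apply conic_single; auto.
  - exists (0 + p Fin.F1 + - q Fin.F1). split; [lra|].
    replace (vcons 0 (fm_pair p q)) with
      (vadd (vadd (vzero (S n)) (vscal (p Fin.F1) q)) (vscal (- q Fin.F1) p)).
    + apply conic_cons; auto; [lra|]. apply conic_cons; auto; [lra|constructor].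
    + vext. pattern x; revert x; apply Fin_S_ind; intros;
        unfold vadd, vscal, vzero, vcons, fm_pair; simpl; ring.
Qed.

Lemma list_argmax (T : Type) (l : list T) (f : T -> R) : l <> [] ->
  exists a, In a l /\ forall b, In b l -> f b <= f a.
Proof.
  induction l as [|a l IH]; intro H; [congruence|].
  destruct l as [|a' l'].
  - exists a. split; [left; auto|]. intros b [E|[]]; subst; lra.
  - destruct IH as [m [Hm Hm']]; [discriminate|].
    destruct (Rle_dec (f a) (f m)).
    + exists m. split; [right; auto|]. intros b [E|Hb]; subst; auto.
    + exists a. split; [left; auto|]. intros b [E|Hb]; subst; [lra|].
      specialize (Hm' b Hb). lra.
Qed.

Lemma list_separation (T : Type) (A B : list T) (k : T -> R) :
  (forall a b, In a A -> In b B -> k b < k a) ->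
  exists v0, (forall a, In a A -> v0 < k a) /\ (forall b, In b B -> k b < v0).
Proof.
  intro H.
  destruct A as [|a0 A]; destruct B as [|b0 B].
  - exists 0. split; intros _ [].
  - destruct (list_argmax _ (b0 :: B) k) as [bm [Hbm Hbm']]; [discriminate|].
    exists (k bm + 1). split; [intros _ []|]. intros b Hb. specialize (Hbm' b Hb). lra.
  - destruct (list_argmax _ (a0 :: A) (fun a => - k a)) as [am [Ham Ham']]; [discriminate|].
    exists (k am - 1). split; [|intros _ []]. intros a Ha. specialize (Ham' a Ha). simpl in Ham'. lra.
  - destruct (list_argmax _ (b0 :: B) k) as [bm [Hbm Hbm']]; [discriminate|].
    destruct (list_argmax _ (a0 :: A) (fun a => - k a)) as [am [Ham Ham']]; [discriminate|].
    pose proof (H am bm Ham Hbm).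
    exists ((k bm + k am) / 2). split.
    + intros a Ha. specialize (Ham' a Ha). simpl in Ham'. lra.
    + intros b Hb. specialize (Hbm' b Hb). lra.
Qed.

(* The first coordinate [v0] of the new direction must lie strictly between the
   thresholds [-tail(c).v' / c_1] of the vectors with [c_1 < 0] and those with [c_1 > 0];
   the pairs of [fm_elim L] are exactly what makes these thresholds separated. *)
Lemma fm_elim_direction n (L : list (vec (S n))) (v' : vec n) :
  (forall c, In c (fm_elim L) -> dot c v' < 0) ->
  exists v, forall c, In c L -> dot c v < 0.
Proof.
  intro Hv'.
  set (k := fun c : vec (S n) => - dot (vtail c) v' / c Fin.F1).
  destruct (list_separation _ (filter head_pos L) (filter head_neg L) k) as [v0 [H1 H2]].
  { intros a b Ha Hb. apply filter_In in Ha as [Ha Ha']. apply filter_In in Hb as [Hb Hb'].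
    apply head_pos_spec in Ha'. apply head_neg_spec in Hb'.
    pose proof (Hv' _ (fm_elim_pair _ _ _ _ Ha Ha' Hb Hb')) as Hd.
    rewrite dot_fm_pair in Hd.
    assert (Ka : k a * a Fin.F1 = - dot (vtail a) v') by (unfold k; field; lra).
    assert (Kb : k b * b Fin.F1 = - dot (vtail b) v') by (unfold k; field; lra).
    assert (E : a Fin.F1 * b Fin.F1 * (k a - k b) < 0).
    { replace (a Fin.F1 * b Fin.F1 * (k a - k b)) with
        (a Fin.F1 * (- (k b * b Fin.F1)) - b Fin.F1 * (- (k a * a Fin.F1))) by ring.
      rewrite Ka, Kb. lra. }
    assert (a Fin.F1 * b Fin.F1 < 0) by nra. nra. }
  exists (vcons v0 v'). intros c Hc. rewrite dot_S.
  change (vtail (vcons v0 v')) with v'. change (vcons v0 v' Fin.F1) with v0.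
  destruct (Rtotal_order (c Fin.F1) 0) as [Hn|[Hz|Hp]].
  - assert (Hb : In c (filter head_neg L)) by (apply filter_In; split; auto; apply head_neg_spec; auto).
    specialize (H2 c Hb).
    assert (Kc : k c * c Fin.F1 = - dot (vtail c) v') by (unfold k; field; lra).
    nra.
  - rewrite Hz. specialize (Hv' _ (fm_elim_vtail _ _ _ Hc Hz)). lra.
  - assert (Ha : In c (filter head_pos L)) by (apply filter_In; split; auto; apply head_pos_spec; auto).
    specialize (H1 c Ha).
    assert (Kc : k c * c Fin.F1 = - dot (vtail c) v') by (unfold k; field; lra).
    nra.
Qed.

Theorem gordan n (L : list (vec n)) :
  (exists v, forall c, In c L -> dot c v < 0) \/ (exists s, 0 < s /\ conic L (vzero n) s).
Proof.
  revert L; induction n; intro L.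
  - destruct L as [|c L].
    + left. exists (vzero 0). intros c [].
    + right. exists 1. split; [lra|].
      replace (vzero 0) with c by (vext; inversion x). apply conic_single; left; auto.
  - destruct (IHn (fm_elim L)) as [[v' Hv'] | [s [Hs Hc]]].
    + left. apply (fm_elim_direction _ _ v'); auto.
    + right.
      destruct (conic_lift n L (fm_elim L) (conic_fm_elim n L) _ _ Hc) as [s2 [_ [Hs2 Hc2]]].
      exists s2. rewrite <- vcons_zero. auto.
Qed.

Fixpoint fin_list (m : nat) : list (Fin.t m) :=
  match m with O => [] | S k => Fin.F1 :: map Fin.FS (fin_list k) end.

Lemma in_fin_list m (j : Fin.t m) : In j (fin_list m).
Proof.
  induction m; [inversion j|]. pattern j; revert j; apply Fin_S_ind; cbv beta; simpl.
  - left; auto.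
  - intro; right; apply in_map; auto.
Qed.

Lemma conic_multipliers n m p (A : Fin.t m -> vec n) (B : Fin.t p -> vec n)
  (act : Fin.t p -> Prop) (L : list (vec n))
  (HL : forall c, In c L -> (exists j, c = A j) \/ (exists i, act i /\ c = B i)) w s :
  conic L w s -> exists lam mu, (forall j, 0 <= lam j) /\ (forall i, 0 <= mu i) /\
    (forall i, mu i <> 0 -> act i) /\
    (forall k, w k = vsum m (fun j => lam j * A j k) + vsum p (fun i => mu i * B i k)) /\
    s = vsum m lam + vsum p mu.
Proof.
  induction 1.
  - exists (fun _ => 0), (fun _ => 0). repeat split; try (intros; lra).
    + intros k. unfold vzero. rewrite !vsum_ext_zero; intros; ring.
    + rewrite !vsum_zero. ring.
  - destruct IHconic as [lam [mu [Hl [Hm [Ha [Hw Hs]]]]]].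
    destruct (HL c H) as [[j0 E]|[i0 [Hi0 E]]]; subst c.
    + exists (fun j => lam j + if Fin.eq_dec j j0 then a else 0), mu.
      repeat split; auto.
      * intro j; destruct Fin.eq_dec; specialize (Hl j); lra.
      * intro k. unfold vadd, vscal. rewrite Hw.
        rewrite (vsum_ext _ (fun j => (lam j + (if Fin.eq_dec j j0 then a else 0)) * A j k)
          (fun j => lam j * A j k + (if Fin.eq_dec j j0 then a * A j k else 0)))
          by (intro j; destruct Fin.eq_dec; ring).
        rewrite vsum_add, (vsum_indicator _ (fun j => a * A j k)). ring.
      * rewrite vsum_add, (vsum_indicator _ (fun _ => a)), Hs. ring.
    + exists lam, (fun i => mu i + if Fin.eq_dec i i0 then a else 0).
      repeat split; auto.
      * intro i; destruct Fin.eq_dec; specialize (Hm i); lra.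
      * intros i Hi. destruct Fin.eq_dec; [subst; auto|]. apply Ha. lra.
      * intro k. unfold vadd, vscal. rewrite Hw.
        rewrite (vsum_ext _ (fun i => (mu i + (if Fin.eq_dec i i0 then a else 0)) * B i k)
          (fun i => mu i * B i k + (if Fin.eq_dec i i0 then a * B i k else 0)))
          by (intro i; destruct Fin.eq_dec; ring).
        rewrite vsum_add, (vsum_indicator _ (fun i => a * B i k)). ring.
      * rewrite vsum_add, (vsum_indicator _ (fun _ => a)), Hs. ring.
Qed.

Lemma fin_uniform m (Q : Fin.t m -> R -> Prop) :
  (forall k, exists e, 0 < e /\ forall e', 0 < e' <= e -> Q k e') ->
  exists e, 0 < e /\ forall e', 0 < e' <= e -> forall k, Q k e'.
Proof.
  revert Q; induction m; intros Q H.
  - exists 1. split; [lra|]. intros e' _ k; inversion k.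
  - destruct (H Fin.F1) as [e1 [He1 He1']].
    destruct (IHm (fun k => Q (Fin.FS k))) as [e2 [He2 He2']]; [intro; apply H|].
    exists (Rmin e1 e2). split; [apply Rmin_pos; auto|].
    pose proof (Rmin_l e1 e2). pose proof (Rmin_r e1 e2).
    intros e' He'; apply Fin_S_ind.
    + apply He1'. lra.
    + apply He2'. lra.
Qed.

Lemma small_step A B : 0 <= B -> (A <= 0 \/ 0 < B) ->
  exists e, 0 < e /\ forall e', 0 < e' <= e -> e' * A <= B.
Proof.
  intros HB H. destruct (Rle_dec A 0).
  - exists 1. split; [lra|]. intros. nra.
  - destruct H as [H|H]; [lra|].
    exists (B / A). split; [apply Rdiv_lt_0_compat; lra|].
    intros e' He'. assert (B / A * A = B) by (field; lra). nra.
Qed.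

Lemma has_gradient_along n (f : vec n -> R) x gr d eps :
  has_gradient f x gr -> 0 < eps ->
  exists abar, 0 < abar /\ forall alpha, 0 < alpha <= abar ->
    f (vadd x (vscal alpha d)) <= f x + alpha * (dot gr d + eps).
Proof.
  intros Hf Heps. set (N := vnorm d). assert (HN : 0 <= N) by apply sqrt_pos.
  destruct (Hf (eps / (N + 1))) as [delta [Hdelta Hclose]];
    [apply Rdiv_lt_0_compat; lra|].
  exists (delta / (N + 1)). split; [apply Rdiv_lt_0_compat; lra|].
  intros alpha [Ha1 Ha2].
  assert (Hnorm : vnorm (vscal alpha d) = alpha * N) by (apply vnorm_scal; lra).
  assert (Hsmall : alpha * N < delta).
  { assert (delta / (N + 1) * (N + 1) = delta) by (field; lra). nra. }
  specialize (Hclose (vscal alpha d) ltac:(lra)).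
  rewrite Hnorm, dot_scal_r in Hclose.
  assert (eps / (N + 1) * (alpha * N) <= alpha * eps).
  { assert (eps / (N + 1) * (N + 1) = eps) by (field; lra).
    assert (0 <= eps / (N + 1)) by (apply Rlt_le, Rdiv_lt_0_compat; lra). nra. }
  pose proof (Rle_abs (f (vadd x (vscal alpha d)) - f x - alpha * dot gr d)). lra.
Qed.

Lemma uniform_margin K (A B : Fin.t K -> R) :
  (forall k, A k < 0 \/ 0 < B k) ->
  exists c, 0 < c /\ forall c', 0 < c' <= c -> forall k, A k + c' <= 0 \/ 0 < B k.
Proof.
  intro H. apply fin_uniform. intro k. destruct (H k) as [Hk|Hk].
  - exists (- A k). split; [lra|]. intros; left; lra.
  - exists 1. split; [lra|]. intros; right; lra.
Qed.

Lemma uniform_step K (A B : Fin.t K -> R) c :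
  (forall k, 0 <= B k) -> (forall k, A k + c <= 0 \/ 0 < B k) ->
  exists e, 0 < e /\ forall e', 0 < e' <= e -> forall k, e' * (A k + c) <= B k.
Proof. intros HB H. apply fin_uniform. intro k. apply small_step; auto. Qed.

Section QuadraticSubproblem.

Context {n m p : nat} {df : Fin.t m -> vec n -> vec n}
  {g : Fin.t p -> vec n -> R} {dg : Fin.t p -> vec n -> vec n} {x : vec n}.

Lemma QP_feasible_Phi_zero : QP_feasible df g dg x (Phi g x) (vzero n).
Proof.
  split; intro; rewrite dot_zero_r; [apply Phi_nonneg | pose proof (Phi_ge _ _ g x i); lra].
Qed.

Lemma QP_solution_value_le t d :
  QP_solution df g dg x t d -> t <= Phi g x - / 2 * dot d d.
Proof.
  intros [_ Hopt]. specialize (Hopt _ _ QP_feasible_Phi_zero).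
  rewrite dot_zero_r in Hopt. lra.
Qed.

Lemma QP_solution_zero_value t :
  (1 <= m)%nat -> QP_solution df g dg x t (vzero n) -> t = Phi g x.
Proof.
  intros hm hQP. pose proof (QP_solution_value_le _ _ hQP) as Hle.
  destruct hQP as [[Hf Hg] _]. rewrite dot_zero_r in Hle.
  destruct (Fin_inhabited m hm) as [j].
  assert (Phi g x <= t); [|lra].
  apply vmax0_lub.
  - intro i. specialize (Hg i). rewrite dot_zero_r in Hg. lra.
  - specialize (Hf j). rewrite dot_zero_r in Hf. exact Hf.
Qed.

(* Along a direction [v] of strict first-order decrease, the pair
   [(Phi g x - e c, e v)] is feasible and beats [(Phi g x, 0)] for small [e]. *)
Lemma QP_zero_no_descent v :
  QP_solution df g dg x (Phi g x) (vzero n) ->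
  (forall j, 0 < Phi g x \/ dot (df j x) v < 0) ->
  (forall i, g i x = Phi g x -> dot (dg i x) v < 0) -> False.
Proof.
  intros [_ Hopt] Hj Hi. set (P := Phi g x) in *.
  assert (HP : 0 <= P) by apply Phi_nonneg.
  assert (Hg : forall i, g i x <= P) by (intro; apply Phi_ge).
  assert (Hi' : forall i, dot (dg i x) v < 0 \/ 0 < P - g i x).
  { intro i. destruct (Req_dec (g i x) P) as [E|NE]; [left; auto | right].
    specialize (Hg i). destruct Hg; [lra | contradiction]. }
  destruct (uniform_margin _ (fun j => dot (df j x) v) (fun _ => P)) as [c1 [Hc1 Hc1']].
  { intro j. destruct (Hj j); auto. }
  destruct (uniform_margin _ (fun i => dot (dg i x) v) (fun i => P - g i x))
    as [c2 [Hc2 Hc2']]; auto.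
  pose proof (Rmin_l c1 c2). pose proof (Rmin_r c1 c2).
  assert (Hc : 0 < Rmin c1 c2) by (apply Rmin_pos; auto).
  set (c := Rmin c1 c2) in *.
  destruct (uniform_step _ (fun j => dot (df j x) v) (fun _ => P) c) as [e1 [He1 He1']];
    [auto | apply Hc1'; lra |].
  destruct (uniform_step _ (fun i => dot (dg i x) v) (fun i => P - g i x) c)
    as [e2 [He2 He2']]; [intro i; specialize (Hg i); lra | apply Hc2'; lra |].
  set (vv := dot v v). assert (Hvv : 0 <= vv) by apply dot_self_nonneg.
  set (e := Rmin (Rmin e1 e2) (c / (vv + 1))).
  assert (He : 0 < e) by (repeat apply Rmin_pos; auto; apply Rdiv_lt_0_compat; lra).
  assert (He1e : 0 < e <= e1) by (split; [lra | unfold e; eauto using Rle_trans, Rmin_l]).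
  assert (He2e : 0 < e <= e2) by
    (split; [lra | unfold e; eapply Rle_trans; [apply Rmin_l | apply Rmin_r]]).
  assert (Hevv : e * vv < c).
  { assert (c / (vv + 1) * (vv + 1) = c) by (field; lra).
    assert (e <= c / (vv + 1)) by apply Rmin_r. nra. }
  specialize (Hopt (P - e * c) (vscal e v)).
  rewrite dot_zero_r, dot_scal_l, dot_scal_r in Hopt. fold vv in Hopt.
  assert (Hgain : 0 < e * (c - / 2 * (e * vv))) by (apply Rmult_lt_0_compat; lra).
  enough (Hfeas : QP_feasible df g dg x (P - e * c) (vscal e v))
    by (specialize (Hopt Hfeas); nra).
  split; intro; rewrite dot_scal_r.
  - specialize (He1' e He1e j). simpl in He1'. lra.
  - specialize (He2' e He2e i). simpl in He2'. lra.
Qed.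

Lemma QP_zero_fritz_john :
  QP_solution df g dg x (Phi g x) (vzero n) ->
  exists lam mu, (forall j, 0 <= lam j) /\ (forall i, 0 <= mu i) /\
    (forall i, mu i <> 0 -> g i x = Phi g x) /\
    (forall k, vsum m (fun j => lam j * df j x k) + vsum p (fun i => mu i * dg i x k) = 0) /\
    0 < vsum m lam + vsum p mu.
Proof.
  intro hQP.
  set (active := fun i => if Req_EM_T (g i x) (Phi g x) then true else false).
  set (L := map (fun j => df j x) (fin_list m)
            ++ map (fun i => dg i x) (filter active (fin_list p))).
  destruct (gordan n L) as [[v Hv] | [s [Hs Hc]]].
  - exfalso. apply (QP_zero_no_descent v hQP).
    + intro j. right. apply Hv, in_or_app; left. apply (in_map (fun j => df j x)), in_fin_list.
    + intros i Hi. apply Hv, in_or_app; right. apply (in_map (fun i => dg i x)), filter_In.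
      split; [apply in_fin_list|]. unfold active. destruct Req_EM_T; auto.
  - destruct (conic_multipliers n m p (fun j => df j x) (fun i => dg i x)
                (fun i => g i x = Phi g x) L) with (w := vzero n) (s := s)
      as [lam [mu [Hl [Hm [Ha [Hw Hsum]]]]]]; auto.
    { intros c Hcin. apply in_app_or in Hcin as [H|H].
      - left. apply in_map_iff in H as [j [E _]]. eauto.
      - right. apply in_map_iff in H as [i [E Hi]]. apply filter_In in Hi as [_ Hi].
        unfold active in Hi. destruct Req_EM_T; [|discriminate]. eauto. }
    exists lam, mu. repeat split; auto; [intro k; rewrite <- Hw; reflexivity | lra].
Qed.

Lemma MFCQ_active_comb_zero (mu : Fin.t p -> R) :
  MFCQ g dg x -> (forall i, 0 <= mu i) -> (forall i, mu i <> 0 -> g i x = Phi g x) ->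
  (forall k, vsum p (fun i => mu i * dg i x k) = 0) -> forall i, mu i = 0.
Proof.
  intros [z Hz] Hm Ha Hcomb i0. apply NNPP; intro Hi0.
  assert (Hdot : vsum p (fun i => mu i * dot (dg i x) z) = 0).
  { rewrite <- dot_vsum_l. apply vsum_ext_zero. intro k. rewrite Hcomb. ring. }
  enough (vsum p (fun i => mu i * dot (dg i x) z) < 0) by lra.
  apply (vsum_neg _ _ i0).
  - intro i. destruct (Req_dec (mu i) 0) as [E|NE]; [rewrite E; lra|].
    specialize (Hz i (Ha i NE)). specialize (Hm i). nra.
  - specialize (Hz i0 (Ha i0 Hi0)). specialize (Hm i0). nra.
Qed.

Lemma QP_zero_MFCQ_Phi_zero :
  QP_solution df g dg x (Phi g x) (vzero n) -> MFCQ g dg x -> Phi g x = 0.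
Proof.
  intros hQP [z Hz]. destruct (Phi_nonneg _ _ g x) as [Hlt|E]; auto.
  exfalso. apply (QP_zero_no_descent z hQP); auto.
Qed.

Lemma QP_zero_MFCQ_strongly_critical :
  QP_solution df g dg x (Phi g x) (vzero n) -> MFCQ g dg x -> strongly_critical df g dg x.
Proof.
  intros hQP hM. pose proof (QP_zero_MFCQ_Phi_zero hQP hM) as HP0.
  destruct (QP_zero_fritz_john hQP) as [lam [mu [Hl [Hm [Ha [Hcomb Hpos]]]]]].
  split; [intro i; rewrite <- HP0; apply Phi_ge|].
  exists lam, mu. repeat split; auto.
  - apply NNPP; intro Hn.
    assert (Hl0 : forall j, lam j = 0) by (intro j; apply NNPP; intro; apply Hn; eauto).
    assert (Hmu0 : forall i, mu i = 0).
    { apply MFCQ_active_comb_zero; auto. intro k.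
      rewrite <- (Hcomb k), (vsum_ext_zero m (fun j => lam j * df j x k)); [ring|].
      intro j; rewrite Hl0; ring. }
    rewrite !vsum_ext_zero in Hpos; auto; lra.
  - intro i. destruct (Req_dec (mu i) 0) as [E|NE]; [rewrite E; ring|].
    rewrite (Ha i NE), HP0. ring.
Qed.

Lemma PhiStar_le t d :
  QP_feasible df g dg x t d -> PhiStar g dg x d <= Rmax t 0 - Phi g x.
Proof.
  intros [_ Hg]. unfold PhiStar. apply Rplus_le_compat_r, vmax0_lub; [|apply Rmax_r].
  intro i. destruct Req_EM_T; [|apply Rmax_r].
  eapply Rle_trans; [apply Hg | apply Rmax_l].
Qed.

Lemma theta_le t d sigma j :
  0 <= sigma -> QP_feasible df g dg x t d ->
  theta (df j) g dg sigma x d <= t + sigma * (Rmax t 0 - Phi g x).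
Proof.
  intros Hs Hfeas. unfold theta. apply Rplus_le_compat; [apply (proj1 Hfeas)|].
  apply Rmult_le_compat_l; auto. apply PhiStar_le; auto.
Qed.

(* By (I), [t <= Phi g x - |d|^2/2], so the slope is below [t - sigma |d|^2/2] when
   [t >= 0] and below [t < 0] otherwise. *)
Lemma penalty_slope_neg t d :
  QP_solution df g dg x t d -> d <> vzero n ->
  exists sbar, 0 < sbar /\
    forall sigma, sbar <= sigma -> t + sigma * (Rmax t 0 - Phi g x) < 0.
Proof.
  intros hQP Hd. pose proof (QP_solution_value_le _ _ hQP) as HI.
  pose proof (dot_self_pos _ d Hd) as Hdd. pose proof (Phi_nonneg _ _ g x).
  assert (Hq : 0 <= 2 * Rabs t / dot d d).
  { apply Rmult_le_pos; [pose proof (Rabs_pos t); lra | left; apply Rinv_0_lt_compat; auto]. }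
  exists (1 + 2 * Rabs t / dot d d). split; [lra|]. intros sigma Hsig.
  destruct (Rle_dec 0 t) as [Ht|Ht].
  - rewrite Rmax_left by lra. rewrite Rabs_right in Hsig by lra.
    assert (2 * t / dot d d * dot d d = 2 * t) by (field; lra).
    assert (sigma * dot d d >= dot d d + 2 * t) by nra.
    nra.
  - rewrite Rmax_right by lra. nra.
Qed.

Lemma Phi_along_le t d eps :
  (forall i, has_gradient (g i) x (dg i x)) -> QP_feasible df g dg x t d -> 0 < eps ->
  exists abar, 0 < abar /\ forall alpha, 0 < alpha <= abar ->
    Phi g (vadd x (vscal alpha d)) <= (1 - alpha) * Phi g x + alpha * (Rmax t 0 + eps).
Proof.
  intros Hgrad [_ Hfeas] Heps.
  destruct (fin_uniform p (fun i alpha =>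
              g i (vadd x (vscal alpha d)) <= g i x + alpha * (dot (dg i x) d + eps)))
    as [a [Ha Ha']].
  { intro i. apply has_gradient_along; auto. }
  exists (Rmin 1 a). split; [apply Rmin_pos; lra|]. intros alpha [H0 H1].
  pose proof (Rmin_l 1 a). pose proof (Rmin_r 1 a).
  pose proof (Rmax_l t 0). pose proof (Rmax_r t 0). pose proof (Phi_nonneg _ _ g x).
  apply vmax0_lub; [intro i | nra].
  specialize (Ha' alpha ltac:(lra) i). specialize (Hfeas i).
  pose proof (Phi_ge _ _ g x i). nra.
Qed.

Lemma Psi_descent t d (fj : vec n -> R) (gr : vec n) sigma :
  (forall i, has_gradient (g i) x (dg i x)) -> has_gradient fj x gr ->
  dot gr d <= t -> QP_feasible df g dg x t d -> 0 <= sigma ->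
  t + sigma * (Rmax t 0 - Phi g x) < 0 ->
  exists abar, 0 < abar /\ forall alpha, 0 < alpha <= abar ->
    Psi fj g sigma (vadd x (vscal alpha d)) < Psi fj g sigma x.
Proof.
  intros Hg Hf Hslope Hfeas Hs HB.
  set (B := t + sigma * (Rmax t 0 - Phi g x)) in *.
  set (eps := - B / (2 * (1 + sigma))).
  assert (Heps : 0 < eps) by (apply Rdiv_lt_0_compat; lra).
  assert (Hepsv : (1 + sigma) * eps = - B / 2) by (unfold eps; field; lra).
  destruct (has_gradient_along _ fj x gr d eps Hf Heps) as [a1 [Ha1 Hf1]].
  destruct (Phi_along_le _ _ eps Hg Hfeas Heps) as [a2 [Ha2 Hg2]].
  exists (Rmin a1 a2). split; [apply Rmin_pos; auto|]. intros alpha [H0 H1].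
  pose proof (Rmin_l a1 a2). pose proof (Rmin_r a1 a2).
  specialize (Hf1 alpha ltac:(lra)). specialize (Hg2 alpha ltac:(lra)).
  unfold Psi.
  assert (sigma * Phi g (vadd x (vscal alpha d))
          <= sigma * ((1 - alpha) * Phi g x + alpha * (Rmax t 0 + eps)))
    by (apply Rmult_le_compat_l; auto).
  assert (alpha * (dot gr d + eps) <= alpha * (t + eps)) by (apply Rmult_le_compat_l; lra).
  assert (alpha * B < 0) by nra.
  unfold B in *. nra.
Qed.

End QuadraticSubproblem.

Theorem mainTheorem2 (n m p : nat) (hm : (1 <= m)%nat)
  (f : Fin.t m -> vec n -> R) (df : Fin.t m -> vec n -> vec n)
  (g : Fin.t p -> vec n -> R) (dg : Fin.t p -> vec n -> vec n)
  (hf : forall j, is_C1 (f j) (df j))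
  (hg : forall i, is_C1 (g i) (dg i))
  (x : vec n) (t : R) (d : vec n)
  (hQP : QP_solution df g dg x t d) :
  (* (I) *)
  t <= Phi g x - / 2 * dot d d /\
  (* (II) *)
  (d = vzero n -> MFCQ g dg x -> strongly_critical df g dg x) /\
  (* (III) *)
  (d <> vzero n ->
   exists sbar : R, 0 < sbar /\
     forall sigma : R, sbar <= sigma -> forall j : Fin.t m,
       theta (df j) g dg sigma x d < 0 /\
       exists abar : R, 0 < abar /\
         forall alpha : R, 0 < alpha <= abar ->
           Psi (f j) g sigma (vadd x (vscal alpha d)) < Psi (f j) g sigma x).
Proof.
  split; [exact (QP_solution_value_le t d hQP)|]. split.
  - intros Hd hM. subst d.
    rewrite (QP_solution_zero_value t hm hQP) in hQP.
    exact (QP_zero_MFCQ_strongly_critical hQP hM).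
  - intro Hd. destruct (penalty_slope_neg t d hQP Hd) as [sbar [Hsbar Hslope]].
    exists sbar. split; auto. intros sigma Hsigma j.
    specialize (Hslope sigma Hsigma). destruct hQP as [Hfeas _].
    split.
    + pose proof (theta_le t d sigma j ltac:(lra) Hfeas). lra.
    + apply (Psi_descent t d (f j) (df j x) sigma (fun i => proj1 (hg i) x) (proj1 (hf j) x)
               (proj1 Hfeas j) Hfeas); lra.
Qed.
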